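(* Let $T\ge1$, $K_0=\{x_0\}$ and $K_1,\dots,K_T\subseteq\mathbb R$ compact, $\Omega=K_0\times\dots\times K_T$, and let $\widehat Q$ be a martingale measure on $\Omega$ with marginals $\widehat Q_t$. Let $u_0,\dots,u_T:\mathbb R\to[-\infty,+\infty)$ be concave, upper semicontinuous, nondecreasing with $u_t(0)=0$ and $u_t(x)\le x$ for all $x$. For $\varphi_t\in C_b(K_t)$ define $$U_{\widehat Q_t}(\varphi_t)=\sup_{\alpha,\lambda\in\mathbb R}\Big(\int_{K_t}u_t(\varphi_t(x_t)+\alpha x_t+\lambda)\,d\widehat Q_t(x_t)-(\alpha x_0+\lambda)\Big).$$ Then for each $t=0,\dots,T$: 1. $U_{\widehat Q_t}$ is real valued on $C_b(K_t)$ and $U_{\widehat Q_t}(0)=0$; 2. $U_{\widehat Q_t}$ is concave and nondecreasing; 3. $U_{\widehat Q_t}$ is stock additive on $C_b(K_t)$: $U_{\widehat Q_t}(\varphi_t+\alpha_tX_t+\lambda_t)=U_{\widehat Q_t}(\varphi_t)+\alpha_tx_0+\lambda_t$ for all $\alpha_t,\lambda_t\in\mathbb R$, $\varphi_t\in C_b(K_t)$, where $X_t(x_t)=x_t$.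
   Context: A martingale measure on $\Omega$ is a Borel probability measure under which the canonical process $X_t(x)=x_t$ is a martingale with respect to its natural filtration. $C_b(K_t)$: continuous real functions on $K_t$. *)

From HB Require Import structures.
From mathcomp Require Import all_boot all_order all_algebra.
From mathcomp Require Import all_classical all_reals all_analysis.
Set Implicit Arguments. Unset Strict Implicit. Unset Printing Implicit Defensive.
Import Order.TTheory GRing.Theory Num.Theory.
Import numFieldNormedType.Exports.
Local Open Scope classical_set_scope.
Local Open Scope ring_scope.

(* Paths (x_0, ..., x_T) are functions 'I_T.+1 -> R; the sigma-algebra is the
   one generated by the coordinate maps (= Borel sigma-algebra of R^(T+1)). *)
Definition coord_gen (R : realType) (T : nat) : set (set ('I_T.+1 -> R)) :=
  [set A | exists (s : 'I_T.+1) (B : set R),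
      measurable B /\ A = (fun w : 'I_T.+1 -> R => w s) @^-1` B].

Definition path_space (R : realType) (T : nat) := g_sigma_algebraType (@coord_gen R T).

Definition canX (R : realType) (T : nat) (t : 'I_T.+1) : path_space R T -> R :=
  fun w => w t.

Definition nat_filtration (R : realType) (T : nat) (t : 'I_T.+1)
  : set (set (path_space R T)) :=
  <<s [set A | exists (s : 'I_T.+1) (B : set R),
      (s <= t)%N /\ measurable B /\ A = canX s @^-1` B] >>.

(* P is a martingale measure on Omega = K_0 x ... x K_T:
   P is carried by Omega, and the canonical process is an (integrable)
   martingale w.r.t. its natural filtration. *)
Definition martingale_measure (R : realType) (T : nat) (K : 'I_T.+1 -> set R)
  (P : probability (path_space R T) R) : Prop :=
  P [set w : path_space R T | forall t, K t (w t)] = 1%E /\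
  (forall t : 'I_T.+1, P.-integrable setT (fun w => (canX t w)%:E)) /\
  (forall s t : 'I_T.+1, nat_of_ord t = (nat_of_ord s).+1 ->
     forall A, nat_filtration s A ->
       (\int[P]_(w in A) (canX t w)%:E = \int[P]_(w in A) (canX s w)%:E)%E).

Definition marginal (R : realType) (T : nat) (P : probability (path_space R T) R)
  (t : 'I_T.+1) : set R -> \bar R :=
  pushforward P (canX t).

Definition econcave (R : realType) (u : R -> \bar R) : Prop :=
  forall (x y s : R), (0 < s < 1)%R ->
    (s%:E * u x + (1 - s)%:E * u y <= u (s * x + (1 - s) * y)%R)%E.

Definition eusc (R : realType) (u : R -> \bar R) : Prop :=
  forall (x r : R), (u x < r%:E)%E -> \forall y \near x, (u y < r%:E)%E.

Definition enondecreasing (R : realType) (u : R -> \bar R) : Prop :=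
  forall x y : R, (x <= y)%R -> (u x <= u y)%E.

Definition Ustock (R : realType) (Q : set R -> \bar R) (K : set R)
  (u : R -> \bar R) (x0 : R) (phi : R -> R) : \bar R :=
  ereal_sup [set (\int[Q]_(x in K) u (phi x + a * x + l)%R - (a * x0 + l)%R%:E)%E
            | a in [set: R] & l in [set: R]].

From HB Require Import structures.
From mathcomp Require Import all_boot all_order all_algebra.
From mathcomp Require Import all_classical all_reals all_analysis.
From mathcomp Require Import measurable_realfun.
From mathcomp Require Import ring lra.
Import Order.TTheory GRing.Theory Num.Theory.
Import numFieldNormedType.Exports.
Local Open Scope classical_set_scope.
Local Open Scope ring_scope.

(* Under a martingale measure each marginal Q_t is a probability carried by
   K_t whose barycenter is x_0: the mean of X_t is propagated from X_0 = x_0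
   by the martingale property, and the properties of U use nothing else.  Since
   u_t(y) <= y, every objective in the supremum defining U(phi) is at most
   max phi, while alpha = 0, lambda = max |phi| gives an objective at least
   -max |phi|; so U is finite.  Concavity of u_t makes the objective jointly
   concave in (phi, alpha, lambda), which passes to the supremum, and the
   change of variables (alpha, lambda) -> (alpha + a, lambda + l) gives stock
   additivity. *)

Section marginal_measure.
Context {R : realType} {T : nat}.

Lemma measurable_canX (t : 'I_T.+1) : measurable_fun setT (canX (R:=R) t).
Proof. by move=> _ B mB; rewrite setTI; apply: sub_sigma_algebra; exists t, B. Qed.

Lemma measurable_preimage_canX (t : 'I_T.+1) (B : set R) :
  measurable B -> measurable (canX t @^-1` B).
Proof. by move=> mB; rewrite -[X in measurable X]setTI; exact: measurable_canX. Qed.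

Variables (P : probability (path_space R T) R) (t : 'I_T.+1).

(* The library declares the pushforward measure under a measurability
   hypothesis, so it has to be instantiated by hand. *)
HB.instance Definition _ := Measure.copy (marginal P t)
  (measure_function_pushforward__canonical__measure_function_Measure P
    (measurable_canX t)).

End marginal_measure.

Section martingale_marginals.
Local Open Scope ereal_scope.
Context {R : realType} {T : nat} {x0 : R} {K : 'I_T.+1 -> set R}
  {P : probability (path_space R T) R}.
Hypotheses (K0 : K ord0 = [set x0]) (cK : forall t, compact (K t))
  (mP : martingale_measure K P).

Let mK t : measurable (K t) := compact_measurable (cK t).

Lemma marginal_K t : marginal P t (K t) = 1.
Proof.
have [POmega _] := mP; rewrite /marginal /pushforward.
apply/eqP; rewrite eq_le probability_le1 /=; last exact: measurable_preimage_canX.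
have mOmega : measurable [set w : path_space R T | forall t, K t (w t)].
  rewrite [X in measurable X](_ : _ = \bigcap_(t in setT) canX t @^-1` K t).
    by apply: fin_bigcap_measurable => // s _; exact: measurable_preimage_canX.
  by apply/seteqP; split => [w wK s _ | w wK s]; exact: wK.
rewrite -POmega le_measure ?inE //; first exact: measurable_preimage_canX.
by move=> w /(_ t).
Qed.

Lemma integral_marginal t (f : R -> \bar R) : measurable_fun setT f ->
  P.-integrable setT (f \o canX t) ->
  \int[P]_(w in setT) f (canX t w) = \int[marginal P t]_(x in K t) f x.
Proof.
move=> mf intf.
have intf' : P.-integrable (canX t @^-1` setT) (f \o canX t).
  by rewrite preimage_setT.
have := integral_pushforward (measurable_canX t) mf intf' measurableT.
rewrite preimage_setT => <-.
rewrite (@negligible_integral _ _ _ (marginal P t) setT (~` K t) f).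
- by rewrite setTD setCK.
- exact: measurableC.
- exact: measurableT.
- exact: (@integrable_pushforward _ _ _ _ R (canX t) (measurable_canX t) P
    setT f mf intf' measurableT).
- have PK : P (canX t @^-1` K t) = 1 := marginal_K t.
  change (P (canX t @^-1` (~` K t)) = 0).
  rewrite preimage_setC probability_setC ?PK ?subee //.
  exact: measurable_preimage_canX.
Qed.

Lemma expectation_canX t : \int[P]_(w in setT) (canX t w)%:E = x0%:E.
Proof.
have [_ [intX mart]] := mP.
case: t => n; elim: n => [|n IH] ltn.
  have -> : Ordinal ltn = ord0 by exact: val_inj.
  rewrite (integral_marginal ord0 EFin (@EFin_measurable R setT) (intX ord0)) K0.
  rewrite (eq_integral (fun=> x0%:E)); last by move=> x; rewrite inE => ->.
  rewrite integral_cst; last exact: measurable_set1.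
  rewrite [X in _ * X](_ : _ = 1) ?mule1 //.
  by rewrite -K0; exact: marginal_K.
rewrite -(IH (ltnW ltn)) (mart (Ordinal (ltnW ltn))) //.
apply: sub_sigma_algebra; exists (Ordinal (ltnW ltn)), setT.
by rewrite preimage_setT.
Qed.

Lemma marginal_barycenter t : \int[marginal P t]_(x in K t) x%:E = x0%:E.
Proof.
have [_ [intX _]] := mP.
rewrite -(expectation_canX t).
by rewrite (integral_marginal t EFin (@EFin_measurable R setT) (intX t)).
Qed.

End martingale_marginals.

Section integral_order.
Local Open Scope ereal_scope.
Context {d} {T : measurableType d} {R : realType} {mu : {measure set T -> \bar R}}.
Context {D : set T} (mD : measurable D).

Lemma le_integral_measurable {f g : T -> \bar R} :
  measurable_fun D f -> measurable_fun D g -> (forall x, D x -> f x <= g x) ->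
  \int[mu]_(x in D) f x <= \int[mu]_(x in D) g x.
Proof.
move=> mf mg fg.
have fg' : {in D, forall x, f x <= g x} by move=> x /set_mem; exact: fg.
rewrite integralE [leRHS]integralE leeB//.
- apply: ge0_le_integral => //; try exact: measurable_funepos.
  by move=> x Dx; exact: funepos_le fg' _ (mem_set Dx).
- apply: ge0_le_integral => //; try exact: measurable_funeneg.
  by move=> x Dx; exact: funeneg_le fg' _ (mem_set Dx).
Qed.

Lemma integrable_le_integrable {f g : T -> \bar R} :
  measurable_fun D f -> mu.-integrable D g -> (forall x, D x -> f x <= g x) ->
  \int[mu]_(x in D) f x != -oo -> mu.-integrable D f.
Proof.
move=> mf ig fg fNy; apply/integrableP; split => //.
apply/(abse_integralP mu mD mf); rewrite -fin_num_abs fin_numE fNy /=.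
have [mg gfin] := integrableP _ _ _ ig.
apply/negP => /eqP fy.
have := le_integral_measurable mf mg fg; rewrite fy leye_eq => /eqP gy.
have := le_abse_integral mu mD mg; rewrite gy /=.
by move=> /(lt_le_trans gfin); rewrite ltxx.
Qed.

End integral_order.

Lemma compact_continuous_bounded {X : topologicalType} {R : realType}
    {V : normedModType R} {A : set X} {f : X -> V} :
  compact A -> {within A, continuous f} -> exists M : R, forall x, A x -> `|f x| <= M.
Proof.
move=> cA cf; have [M [_ HM]] := compact_bounded (continuous_compact cf cA).
by exists (M + 1) => x Ax; apply: (HM (M + 1)); [rewrite ltrDl | exists x].
Qed.

Section extended_real_lemmas.
Local Open Scope ereal_scope.
Context (R : realType).

Lemma eusc_measurable (u : R -> \bar R) :
  eusc u -> measurable_fun setT u.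
Proof.
move=> usc_u; have lsc : lower_semicontinuous (fun x => - u x).
  move=> x a; rewrite lteNr => /usc_u ux.
  by exists [set y | u y < (- a)%:E] => // y /=; rewrite lteNr.
have := measurableT_comp (@oppe_measurable R setT) (lower_semicontinuous_measurable lsc).
by apply: eq_measurable_fun => x _ /=; rewrite oppeK.
Qed.

Lemma le_convex_ereal_sup (A B : set (\bar R)) (c : \bar R) (s : R) :
  (0 <= s <= 1)%R -> ereal_sup A \is a fin_num -> ereal_sup B \is a fin_num ->
  (forall a b, A a -> B b -> a \is a fin_num -> b \is a fin_num ->
     s%:E * a + (1 - s)%:E * b <= c) ->
  s%:E * ereal_sup A + (1 - s)%:E * ereal_sup B <= c.
Proof.
move=> /andP[s0 s1] Afin Bfin convAB; apply/lee_addgt0Pr => e e0.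
have [a Aa lt_a] := ub_ereal_sup_adherent e0 Afin.
have [b Bb lt_b] := ub_ereal_sup_adherent e0 Bfin.
have adherent_fin S x : ereal_sup S \is a fin_num -> S x ->
    ereal_sup S - e%:E < x -> x \is a fin_num.
  move=> Sfin Sx ltx; rewrite fin_numElt (le_lt_trans _ ltx) ?leNye //=.
  by rewrite (le_lt_trans (ereal_sup_ubound Sx)) // -(fineK Sfin) ltry.
have afin := adherent_fin _ _ Afin Aa lt_a.
have bfin := adherent_fin _ _ Bfin Bb lt_b.
apply: le_trans (leeD (convAB _ _ Aa Bb afin bfin) (lexx e%:E)).
move: lt_a lt_b; rewrite -(fineK Afin) -(fineK Bfin) -(fineK afin) -(fineK bfin).
rewrite -!EFinB !lte_fin -!EFinM -!EFinD lee_fin => lt_a lt_b.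
have : (s * (fine (ereal_sup A) - fine a) <= s * e)%R.
  by rewrite ler_wpM2l //; lra.
have : ((1 - s) * (fine (ereal_sup B) - fine b) <= (1 - s) * e)%R.
  by rewrite ler_wpM2l //; lra.
lra.
Qed.

End extended_real_lemmas.

Lemma compact_continuous_integrable (R : realType) (mu : {measure set R -> \bar R})
    (A : set R) (f : R -> R) :
  compact A -> (mu A < +oo)%E -> {within A, continuous f} ->
  mu.-integrable A (EFin \o f).
Proof.
move=> cA muA cf; have mA := compact_measurable cA.
apply: measurable_bounded_integrable => //.
  exact: subspace_continuous_measurable_fun.
have /compact_bounded[M [_ fM]] := continuous_compact cf cA.
by exists M; split; rewrite ?num_real // => ? ? ? ?; exact: fM.
Qed.

Section stock_additive_utility.
Local Open Scope ereal_scope.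
Context (R : realType) (Q : {measure set R -> \bar R}) (K : set R) (x0 : R)
  (v : R -> \bar R).
Hypotheses (cK : compact K) (QK : Q K = 1)
  (Q_barycenter : \int[Q]_(x in K) x%:E = x0%:E)
  (v_concave : econcave v) (v_usc : eusc v) (v_nondecreasing : enondecreasing v)
  (v0 : v 0%R = 0) (v_le_id : forall x, v x <= x%:E).

Let mK : measurable K := compact_measurable cK.

Local Notation U := (Ustock Q K v x0).

Definition Ustock_obj (phi : R -> R) (a l : R) :=
  \int[Q]_(x in K) v (phi x + a * x + l)%R - (a * x0 + l)%:E.

Lemma UstockE (phi : R -> R) :
  U phi = ereal_sup [set Ustock_obj phi a l | a in [set: R] & l in [set: R]].
Proof. by []. Qed.

Lemma Ustock_obj_le_Ustock (phi : R -> R) (a l : R) : Ustock_obj phi a l <= U phi.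
Proof. by apply: ereal_sup_ubound; exists a => //; exists l. Qed.

Lemma integrable_affine (a c : R) : Q.-integrable K (fun x => (a * x + c)%:E).
Proof.
have affine_cont : continuous (fun x : R => a * x + c)%R.
  move=> x; apply: cvgD; last exact: cvg_cst.
  by apply: cvgM; [exact: cvg_cst | exact: cvg_id].
apply: (@compact_continuous_integrable _ Q K (fun x => a * x + c)%R cK).
  by rewrite QK ltry.
exact: continuous_subspaceT.
Qed.

Lemma integral_affine (a c : R) : \int[Q]_(x in K) (a * x + c)%:E = (a * x0 + c)%:E.
Proof.
have int_id : Q.-integrable K EFin.
  by apply: (eq_integrable mK _ _ _ (integrable_affine 1 0)) => x _; rewrite mul1r addr0.
have int_cst : Q.-integrable K (fun=> c%:E).
  by apply: (eq_integrable mK _ _ _ (integrable_affine 0 c)) => x _; rewrite mul0r add0r.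
rewrite (eq_integral (fun x => a%:E * x%:E + c%:E)); last first.
  by move=> x _; rewrite EFinD EFinM.
rewrite integralD //; last exact: integrableZl.
by rewrite integralZl // Q_barycenter integral_cst // QK mule1 -EFinM -EFinD.
Qed.

Lemma measurable_v_shift (phi : R -> R) (a l : R) : measurable_fun K phi ->
  measurable_fun K (fun x => v (phi x + a * x + l)%R).
Proof.
move=> mphi; apply: measurableT_comp; first exact: eusc_measurable.
apply: measurable_funD; last exact: measurable_cst.
by apply: measurable_funD => //; exact: mulrl_measurable.
Qed.

Lemma Ustock_obj_ub (phi : R -> R) (M : R) (a l : R) : measurable_fun K phi ->
  (forall x, K x -> phi x <= M)%R -> Ustock_obj phi a l <= M%:E.
Proof.
move=> mphi phiM; rewrite /Ustock_obj leeBlDr //.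
have [maff _] := integrableP _ _ _ (integrable_affine a (M + l)).
apply: le_trans (le_integral_measurable mK (measurable_v_shift _ a l mphi) maff _) _.
  move=> x Kx; apply: le_trans (v_le_id _) _; rewrite lee_fin.
  by have := phiM x Kx; lra.
by rewrite integral_affine -EFinD lee_fin; lra.
Qed.

Lemma Ustock_ub (phi : R -> R) (M : R) : measurable_fun K phi ->
  (forall x, K x -> phi x <= M)%R -> U phi <= M%:E.
Proof.
move=> mphi phiM; apply: ge_ereal_sup => _ [a _ [l _ <-]].
exact: Ustock_obj_ub.
Qed.

Lemma Ustock_lb (phi : R -> R) (M : R) :
  (forall x, K x -> - M <= phi x)%R -> (- M)%:E <= U phi.
Proof.
move=> phiM; apply: le_trans (Ustock_obj_le_Ustock phi 0 M).
rewrite /Ustock_obj mul0r add0r EFinN -[X in X <= _]add0e leeD //.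
apply: integral_ge0 => x Kx; rewrite -v0; apply: v_nondecreasing.
by rewrite mul0r addr0; have := phiM x Kx; lra.
Qed.

Lemma fin_num_Ustock (phi : R -> R) : {within K, continuous phi} ->
  U phi \is a fin_num.
Proof.
move=> cphi; have [M phiM] := compact_continuous_bounded cK cphi.
have phi_le x : K x -> (phi x <= M)%R by move/phiM; rewrite ler_norml => /andP[].
have phi_ge x : K x -> (- M <= phi x)%R by move/phiM; rewrite ler_norml => /andP[].
have mphi := subspace_continuous_measurable_fun mK cphi.
rewrite fin_numElt (lt_le_trans (ltNyr (- M)) (Ustock_lb _ _ phi_ge)).
by rewrite (le_lt_trans (Ustock_ub _ _ mphi phi_le)) ?ltry.
Qed.

Lemma Ustock0 : U (fun=> 0%R) = 0.
Proof.
apply/le_anti/andP; split; first exact: (Ustock_ub _ 0%R (measurable_cst _)).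
apply: le_trans (Ustock_obj_le_Ustock _ 0 0).
rewrite /Ustock_obj mul0r addr0 sube0 (eq_integral (fun=> 0)) ?integral0 //.
by move=> x _; rewrite mul0r !addr0.
Qed.

Lemma le_Ustock (phi psi : R -> R) :
  {within K, continuous phi} -> {within K, continuous psi} ->
  (forall x, K x -> phi x <= psi x)%R -> U phi <= U psi.
Proof.
move=> cphi cpsi phi_psi; apply: ge_ereal_sup => _ [a _ [l _ <-]].
apply: le_trans (Ustock_obj_le_Ustock psi a l).
rewrite /Ustock_obj leeB //; apply: le_integral_measurable => //.
- exact: measurable_v_shift _ _ _ (subspace_continuous_measurable_fun mK cphi).
- exact: measurable_v_shift _ _ _ (subspace_continuous_measurable_fun mK cpsi).
by move=> x Kx; apply: v_nondecreasing; have := phi_psi x Kx; lra.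
Qed.

Lemma Ustock_shift (phi : R -> R) (a l : R) :
  U (fun x => phi x + a * x + l)%R = U phi + (a * x0 + l)%:E.
Proof.
have obj_shift b m : Ustock_obj (fun x => phi x + a * x + l)%R b m =
    Ustock_obj phi (a + b) (l + m) + (a * x0 + l)%:E.
  rewrite /Ustock_obj (eq_integral (fun x => v (phi x + (a + b) * x + (l + m))%R)).
    by rewrite -addeA -EFinN -EFinD; congr (_ + EFin _); ring.
  by move=> x _; congr v; ring.
apply/le_anti/andP; split.
  rewrite UstockE; apply: ge_ereal_sup => _ [b _ [m _ <-]].
  by rewrite obj_shift leeD2r // Ustock_obj_le_Ustock.
rewrite -leeBrDr // UstockE; apply: ge_ereal_sup => _ [b _ [m _ <-]].
have -> : Ustock_obj phi b m = Ustock_obj phi (a + (b - a)) (l + (m - l)).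
  by congr Ustock_obj; ring.
by rewrite leeBrDr // -obj_shift Ustock_obj_le_Ustock.
Qed.

Lemma integrable_v_shift (phi : R -> R) (a l : R) : {within K, continuous phi} ->
  \int[Q]_(x in K) v (phi x + a * x + l)%R \is a fin_num ->
  Q.-integrable K (fun x => v (phi x + a * x + l)%R).
Proof.
move=> cphi; rewrite fin_numE => /andP[intNy _].
have [M phiM] := compact_continuous_bounded cK cphi.
apply: (integrable_le_integrable mK _ (integrable_affine a (M + l))) => //.
  exact: measurable_v_shift _ _ _ (subspace_continuous_measurable_fun mK cphi).
move=> x Kx; apply: le_trans (v_le_id _) _; rewrite lee_fin.
by have := phiM x Kx; rewrite ler_norml => /andP[_]; lra.
Qed.

Lemma Ustock_obj_concave (phi psi : R -> R) (s a1 l1 a2 l2 : R) :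
  {within K, continuous phi} -> {within K, continuous psi} -> (0 < s < 1)%R ->
  Ustock_obj phi a1 l1 \is a fin_num -> Ustock_obj psi a2 l2 \is a fin_num ->
  s%:E * Ustock_obj phi a1 l1 + (1 - s)%:E * Ustock_obj psi a2 l2 <=
  Ustock_obj (fun x => s * phi x + (1 - s) * psi x)%R
    (s * a1 + (1 - s) * a2) (s * l1 + (1 - s) * l2).
Proof.
move=> cphi cpsi s01; rewrite /Ustock_obj fin_numB => /andP[fin1 _].
rewrite fin_numB => /andP[fin2 _].
set chi := (fun x => s * phi x + (1 - s) * psi x)%R.
have i1 := integrable_v_shift _ _ _ cphi fin1.
have i2 := integrable_v_shift _ _ _ cpsi fin2.
have mchi : measurable_fun K chi.
  have mphi := subspace_continuous_measurable_fun mK cphi.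
  have mpsi := subspace_continuous_measurable_fun mK cpsi.
  by apply: measurable_funD; apply: measurable_funM => //; exact: measurable_cst.
have i12 : Q.-integrable K (fun x => s%:E * v (phi x + a1 * x + l1)%R +
                                     (1 - s)%:E * v (psi x + a2 * x + l2)%R).
  by apply: integrableD => //; exact: integrableZl.
have int_le : s%:E * \int[Q]_(x in K) v (phi x + a1 * x + l1)%R +
    (1 - s)%:E * \int[Q]_(x in K) v (psi x + a2 * x + l2)%R <=
    \int[Q]_(x in K) v (chi x + (s * a1 + (1 - s) * a2) * x +
                        (s * l1 + (1 - s) * l2))%R.
  rewrite -!integralZl // -integralD //; try exact: integrableZl.
  apply: le_integral_measurable => //.
  - exact: measurable_int i12.
  - exact: measurable_v_shift.
  move=> x _ /=.
  have -> : (chi x + (s * a1 + (1 - s) * a2) * x + (s * l1 + (1 - s) * l2) =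
      s * (phi x + a1 * x + l1) + (1 - s) * (psi x + a2 * x + l2))%R.
    by rewrite /chi; ring.
  exact: v_concave.
move: int_le; rewrite -(fineK fin1) -(fineK fin2) -!EFinM -!EFinD => int_le.
rewrite leeBrDr // -EFinD; apply: le_trans int_le.
by rewrite lee_fin; lra.
Qed.

Lemma Ustock_concave (phi psi : R -> R) (s : R) :
  {within K, continuous phi} -> {within K, continuous psi} -> (0 <= s <= 1)%R ->
  s%:E * U phi + (1 - s)%:E * U psi <= U (fun x => s * phi x + (1 - s) * psi x)%R.
Proof.
move=> cphi cpsi /andP[s0 s1].
have [->|s_neq0] := eqVneq s 0%R.
  have -> : (fun x => 0 * phi x + (1 - 0) * psi x)%R = psi.
    by apply/funext => x; ring.
  by rewrite mul0e add0e subr0 mul1e.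
have [->|s_neq1] := eqVneq s 1%R.
  have -> : (fun x => 1 * phi x + (1 - 1) * psi x)%R = phi.
    by apply/funext => x; ring.
  by rewrite subrr mul0e adde0 mul1e.
have s01 : (0 < s < 1)%R by rewrite !lt_neqAle eq_sym s_neq0 s_neq1 s0 s1.
rewrite !UstockE; apply: le_convex_ereal_sup; first by rewrite s0 s1.
- exact: fin_num_Ustock.
- exact: fin_num_Ustock.
move=> _ _ [a1 _ [l1 _ <-]] [a2 _ [l2 _ <-]] fin1 fin2.
apply: le_trans (Ustock_obj_le_Ustock _ _ _).
exact: Ustock_obj_concave.
Qed.

End stock_additive_utility.

Theorem lemma4p2 (R : realType) (T : nat) (x0 : R) (K : 'I_T.+1 -> set R)
  (P : probability (path_space R T) R) (u : 'I_T.+1 -> R -> \bar R) :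
  (1 <= T)%N ->
  K ord0 = [set x0] ->
  (forall t, compact (K t)) ->
  martingale_measure K P ->
  (forall t, econcave (u t)) ->
  (forall t, eusc (u t)) ->
  (forall t, enondecreasing (u t)) ->
  (forall t, u t 0 = 0%E) ->
  (forall t x, (u t x <= x%:E)%E) ->
  forall t : 'I_T.+1,
    let U := Ustock (marginal P t) (K t) (u t) x0 in
    (* 1. real valued on C_b(K_t), and U(0) = 0 *)
    ((forall phi : R -> R, {within K t, continuous phi} -> U phi \is a fin_num) /\
     U (fun _ => 0) = 0%E) /\
    (* 2. concave and nondecreasing on C_b(K_t) *)
    ((forall (phi psi : R -> R) (s : R),
        {within K t, continuous phi} -> {within K t, continuous psi} ->
        (0 <= s <= 1)%R ->
        (s%:E * U phi + (1 - s)%:E * U psi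
           <= U (fun x => (s * phi x + (1 - s) * psi x)%R))%E) /\
     (forall phi psi : R -> R,
        {within K t, continuous phi} -> {within K t, continuous psi} ->
        (forall x, K t x -> (phi x <= psi x)%R) -> (U phi <= U psi)%E)) /\
    (* 3. stock additivity *)
    (forall (phi : R -> R) (a l : R), {within K t, continuous phi} ->
        U (fun x => phi x + a * x + l) = (U phi + (a * x0 + l)%R%:E)%E).
Proof.
move=> _ K0 cK mP u_concave u_usc u_nondecreasing u0 u_le_id t U.
have := marginal_K cK mP t; have := marginal_barycenter K0 cK mP t.
move: (cK t) (u_concave t) (u_usc t) (u_nondecreasing t) (u0 t) (u_le_id t).
move=> cKt v_concave v_usc v_nondecreasing v0 v_le_id Q_barycenter QK.
split; [split|split; [split|]].
- by move=> phi cphi; apply: fin_num_Ustock.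
- exact: Ustock0.
- by move=> phi psi s cphi cpsi s01; apply: Ustock_concave.
- by move=> phi psi cphi cpsi; apply: le_Ustock.
- by move=> phi a l _; apply: Ustock_shift.
Qed.
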